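(* Let $L>0$, $\mathbb{T}=[0,L]$ with periodic boundary conditions, $N\ge1$, $D_i>0$, $h_{ij}\in\mathbb{R}$, and $K:\mathbb{T}\to\mathbb{R}$, $K\ge0$, a zero-mean probability density that is twice differentiable with $K'\in L^\infty(\mathbb{T})$. Let $u_0\in C^2(\mathbb{T})^N$ with $u_0(x)>0$ for all $x\in\mathbb{T}$, and let $u$ be the unique solution of \[ \partial_tu_i=D_i\partial_x^2u_i-\partial_x\Big[u_i\,\partial_x\sum_{j=1}^Nh_{ij}(K\ast u_j)\Big],\quad i=1,\dots,N,\qquad u(\cdot,0)=u_0, \] which satisfies $u\in C^1((0,T_* ),L^2(\mathbb{T}))^N\cap C^0([0,T_* ),C^2(\mathbb{T}))^N$, where $T_*=\infty$ if $\|u(t)\|_{L^1}$ is bounded for all time and otherwise $T_*$ is the earliest time at which $\|u(t)\|_{L^1}=2\|u_0\|_{L^1}$. Then $T_*=\infty$, i.e. the solution is global in time.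
   Context: $(K\ast f)(x)=\int_0^LK(x-y)f(y)\,dy$ with periodic extension; for vector-valued $g$, $\|g\|_{L^1}=\sum_i\|g_i\|_{L^1}$. *)

From Stdlib Require Import Reals.
From Coquelicot Require Import Coquelicot.
Open Scope R_scope.

Fixpoint sumR (n : nat) (f : nat -> R) : R :=
  match n with O => 0 | S m => sumR m f + f m end.

(* functions on the torus [0,L] are represented by their L-periodic extension *)
Definition periodic (L : R) (f : R -> R) : Prop := forall x, f (x + L) = f x.

Definition conv (L : R) (K f : R -> R) (x : R) : R :=
  RInt (fun y => K (x - y) * f y) 0 L.

Definition L1norm (L : R) (N : nat) (g : nat -> R -> R) : R :=
  sumR N (fun i => RInt (fun x => Rabs (g i x)) 0 L).

Definition C2per (L : R) (f : R -> R) : Prop :=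
  periodic L f /\
  forall x, ex_derive f x /\ ex_derive (Derive f) x /\ continuous (Derive_n f 2) x.

Definition admissible_kernel (L : R) (K : R -> R) : Prop :=
  periodic L K /\
  (forall x, 0 <= K x) /\
  ex_RInt K 0 L /\ RInt K 0 L = 1 /\
  ex_RInt (fun x => x * K x) (- (L / 2)) (L / 2) /\
  RInt (fun x => x * K x) (- (L / 2)) (L / 2) = 0 /\
  (forall x, ex_derive K x /\ ex_derive (Derive K) x) /\
  (exists M, forall x, Rabs (Derive K x) <= M).

Definition rhs (L : R) (N : nat) (D : nat -> R) (h : nat -> nat -> R)
  (K : R -> R) (u : nat -> R -> R -> R) (i : nat) (t x : R) : R :=
  D i * Derive_n (u i t) 2 x
  - Derive (fun y => u i t y *
        Derive (fun z => sumR N (fun j => h i j * conv L K (u j t) z)) y) x.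

Definition in_time (T : Rbar) (t : R) : Prop := 0 <= t /\ Rbar_lt (Finite t) T.

(* u = (u_0,...,u_{N-1}), u i t x = u_i(x,t), is a solution on [0,T) in the class
   C^1((0,T),L^2(T))^N  cap  C^0([0,T),C^2(T))^N with u(.,0) = u0 *)
Definition is_solution (L : R) (N : nat) (D : nat -> R) (h : nat -> nat -> R)
  (K : R -> R) (u0 : nat -> R -> R) (T : Rbar) (u : nat -> R -> R -> R) : Prop :=
  (forall i, (i < N)%nat -> forall x, u i 0 x = u0 i x) /\
  (forall i t, (i < N)%nat -> in_time T t -> C2per L (u i t)) /\
  (* continuity of t |-> u(t) in C^2(T) on [0,T) *)
  (forall i t, (i < N)%nat -> in_time T t ->
     forall eps, 0 < eps -> exists delta, 0 < delta /\
       forall s, in_time T s -> Rabs (s - t) < delta ->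
         forall k x, (k <= 2)%nat ->
           Rabs (Derive_n (u i s) k x - Derive_n (u i t) k x) < eps) /\
  (* t |-> u(t) is C^1 on (0,T) with values in L^2(T), its derivative being the rhs *)
  (forall i t, (i < N)%nat -> 0 < t -> in_time T t ->
     filterlim
       (fun s => RInt (fun x => ((u i s x - u i t x) / (s - t) - rhs L N D h K u i t x) ^ 2) 0 L)
       (locally' t) (locally 0)) /\
  (forall i t, (i < N)%nat -> 0 < t -> in_time T t ->
     filterlim
       (fun s => RInt (fun x => (rhs L N D h K u i s x - rhs L N D h K u i t x) ^ 2) 0 L)
       (locally t) (locally 0)).

Definition is_Tstar (L : R) (N : nat) (u0 : nat -> R -> R) (u : nat -> R -> R -> R)
  (T : Rbar) : Prop :=
  (T = p_infty /\ exists M, forall t, 0 <= t -> L1norm L N (fun i => u i t) <= M)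
  \/
  (exists T' : R, T = Finite T' /\
     (forall t, 0 <= t < T' -> L1norm L N (fun i => u i t) < 2 * L1norm L N u0) /\
     filterlim (fun t => L1norm L N (fun i => u i t)) (at_left T')
               (locally (2 * L1norm L N u0))).

From Stdlib Require Import Reals Lra Psatz Classical.
From Coquelicot Require Import Coquelicot.
Open Scope R_scope.

(* If T_* were finite, ||u(t)||_{L^1} would tend to 2 ||u0||_{L^1} as t -> T_*.  But each
   component u_i stays nonnegative and, the equation being in divergence form on the
   torus, conserves its mass; hence ||u(t)||_{L^1} = ||u0||_{L^1} > 0 for 0 <= t < T_*.

   Nonnegativity: let Phi(t) = int F(u_i(t)) with F(s) = (s^-)^3, so Phi >= 0 and Phi(0) = 0.
   Multiplying the equation by F'(u_i) and integrating by parts, the diffusion contributes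
   -D_i int F''(u_i) (u_i')^2 <= 0 and, since s F'(s) = 3 F(s), the drift contributes
   -2 int F(u_i) V' where V' = d^2/dx^2 sum_j h_ij (K * u_j) is bounded near any time.
   Hence Phi' <= C Phi locally, and Gronwall plus a continuation argument give Phi = 0. *)

(* Coquelicot's continuity lemmas restated on [R -> R], so that [auto_cont] can apply
   them by higher-order pattern matching. *)
Lemma continuous_Rmult (f g : R -> R) x :
  continuous f x -> continuous g x -> continuous (fun y => f y * g y) x.
Proof. apply (continuous_mult f g). Qed.
Lemma continuous_Rplus (f g : R -> R) x :
  continuous f x -> continuous g x -> continuous (fun y => f y + g y) x.
Proof. apply (continuous_plus f g). Qed.
Lemma continuous_Rminus (f g : R -> R) x :
  continuous f x -> continuous g x -> continuous (fun y => f y - g y) x.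
Proof. apply (continuous_minus f g). Qed.
Lemma continuous_Ropp (f : R -> R) x : continuous f x -> continuous (fun y => - f y) x.
Proof. apply (continuous_opp f). Qed.
Lemma continuous_Rconst (c x : R) : continuous (fun _ : R => c) x.
Proof. apply continuous_const. Qed.
Lemma continuous_Rid (x : R) : continuous (fun y : R => y) x.
Proof. apply continuous_id. Qed.
Lemma continuous_Rabs (f : R -> R) x : continuous f x -> continuous (fun y => Rabs (f y)) x.
Proof. apply continuous_Rabs_comp. Qed.
Lemma continuous_Rdiv (f : R -> R) c x : continuous f x -> continuous (fun y => f y / c) x.
Proof. intros; apply continuous_Rmult; [assumption | apply continuous_Rconst]. Qed.
Lemma continuous_Rpow (f : R -> R) n x : continuous f x -> continuous (fun y => f y ^ n) x.
Proof.
  intros Hf; induction n; simpl; [apply continuous_Rconst | now apply continuous_Rmult].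
Qed.
Lemma continuous_Rcomp (g f : R -> R) x :
  (forall z, continuous g z) -> continuous f x -> continuous (fun y => g (f y)) x.
Proof. intros; apply continuous_comp; auto. Qed.

Ltac auto_cont := repeat match goal with
  | |- continuous (fun _ => ?c) _ => apply continuous_Rconst
  | |- continuous (fun y => y) _ => apply continuous_Rid
  | |- continuous (fun y => @?f y * @?g y) _ => apply (continuous_Rmult f g)
  | |- continuous (fun y => @?f y + @?g y) _ => apply (continuous_Rplus f g)
  | |- continuous (fun y => @?f y - @?g y) _ => apply (continuous_Rminus f g)
  | |- continuous (fun y => - @?f y) _ => apply (continuous_Ropp f)
  | |- continuous (fun y => Rabs (@?f y)) _ => apply (continuous_Rabs f)
  | |- continuous (fun y => @?f y / ?c) _ => apply (continuous_Rdiv f c)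
  | |- continuous (fun y => @?f y ^ ?n) _ => apply (continuous_Rpow f n)
  | |- continuous (fun y => ?g (@?f y)) _ => apply (continuous_Rcomp g f); [solve [auto] |]
  | |- continuous _ _ => solve [auto]
  end.

Lemma continuous_R_eps (f : R -> R) x :
  continuous f x <->
  forall eps, 0 < eps -> exists d, 0 < d /\ forall y, Rabs (y - x) < d -> Rabs (f y - f x) < eps.
Proof.
  split.
  - intros Hc eps He.
    destruct (proj1 (filterlim_locally _ _) Hc (mkposreal eps He)) as [d Hd].
    exists d. split; [apply cond_pos | intros y Hy; exact (Hd y Hy)].
  - intros H. apply filterlim_locally. intros eps.
    destruct (H eps (cond_pos eps)) as [d [Hd Hy]].
    exists (mkposreal d Hd). intros y Hy'. exact (Hy y Hy').
Qed.

Lemma is_derive_continuous (f : R -> R) x (l : R) : is_derive f x l -> continuous f x.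
Proof. intros H. apply (ex_derive_continuous f). now exists l. Qed.

Lemma is_derive_eq (f : R -> R) x (l l' : R) : is_derive f x l -> l = l' -> is_derive f x l'.
Proof. now intros H <-. Qed.

Lemma is_derive_Rmult (f g : R -> R) x (df dg : R) :
  is_derive f x df -> is_derive g x dg -> is_derive (fun y => f y * g y) x (df * g x + f x * dg).
Proof. intros; apply (is_derive_mult f g); auto. intros; apply Rmult_comm. Qed.

Lemma is_derive_Rcomp (f g : R -> R) x (df dg : R) :
  is_derive f (g x) df -> is_derive g x dg -> is_derive (fun y => f (g y)) x (dg * df).
Proof. intros; apply (is_derive_comp f g); auto. Qed.

Lemma is_derive_quadratic_remainder (f : R -> R) x (l k : R) : 0 <= k ->
  (forall y, Rabs (y - x) <= 1 -> Rabs (f y - f x - l * (y - x)) <= k * (y - x) ^ 2) ->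
  is_derive f x l.
Proof.
  intros Hk H. apply is_derive_Reals. intros eps Heps.
  assert (Hp : 0 < Rmin 1 (eps / (k + 1)))
    by (apply Rmin_pos; [lra | apply Rdiv_lt_0_compat; lra]).
  exists (mkposreal _ Hp). intros y Hy0 Hy. simpl in Hy.
  assert (Hy1 : Rabs y <= 1) by (pose proof (Rmin_l 1 (eps / (k + 1))); lra).
  assert (Hy2 : Rabs y < eps / (k + 1)) by (pose proof (Rmin_r 1 (eps / (k + 1))); lra).
  specialize (H (x + y)). replace (x + y - x) with y in H by ring.
  specialize (H Hy1). rewrite <- (pow2_abs y) in H.
  assert (Hay : 0 < Rabs y) by (apply Rabs_pos_lt; auto).
  assert (Hk1 : (k + 1) * Rabs y < eps).
  { replace eps with ((k + 1) * (eps / (k + 1))) by (field; lra). apply Rmult_lt_compat_l; lra. }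
  replace ((f (x + y) - f x) / y - l) with ((f (x + y) - f x - l * y) / y) by (field; auto).
  unfold Rdiv. rewrite Rabs_mult, Rabs_inv.
  apply (Rmult_le_compat_r (/ Rabs y)) in H; [| left; apply Rinv_0_lt_compat; auto].
  eapply Rle_lt_trans; [apply H |].
  replace (k * Rabs y ^ 2 * / Rabs y) with (k * Rabs y) by (field; lra). nra.
Qed.

Lemma ex_RInt_Rcontinuous (f : R -> R) a b : (forall x, continuous f x) -> ex_RInt f a b.
Proof. intros H; apply (ex_RInt_continuous (V := R_CompleteNormedModule)); auto. Qed.

(* Linearity of [RInt] with [R]'s own operations, so that it can be used by [rewrite]. *)
Lemma RInt_Rminus (f g : R -> R) a b : ex_RInt f a b -> ex_RInt g a b ->
  RInt (fun x => f x - g x) a b = RInt f a b - RInt g a b.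
Proof. apply (RInt_minus f g a b). Qed.
Lemma RInt_Rplus (f g : R -> R) a b : ex_RInt f a b -> ex_RInt g a b ->
  RInt (fun x => f x + g x) a b = RInt f a b + RInt g a b.
Proof. apply (RInt_plus f g a b). Qed.
Lemma RInt_Rscal (f : R -> R) c a b : ex_RInt f a b ->
  RInt (fun x => c * f x) a b = c * RInt f a b.
Proof. apply (RInt_scal f a b c). Qed.
Lemma RInt_Ropp (f : R -> R) a b : ex_RInt f a b -> RInt (fun x => - f x) a b = - RInt f a b.
Proof. apply (RInt_opp f a b). Qed.
Lemma RInt_Rdiv (f : R -> R) c a b : ex_RInt f a b ->
  RInt (fun x => f x / c) a b = RInt f a b / c.
Proof.
  intros H. rewrite (RInt_ext _ (fun x => / c * f x)) by (intros; apply Rmult_comm).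
  rewrite RInt_Rscal by auto. apply Rmult_comm.
Qed.
Lemma RInt_Rconst (c a b : R) : RInt (fun _ => c) a b = (b - a) * c.
Proof. rewrite RInt_const. reflexivity. Qed.
Lemma RInt_Chasles_R (f : R -> R) a b c : ex_RInt f a b -> ex_RInt f b c ->
  RInt f a b + RInt f b c = RInt f a c.
Proof. apply (RInt_Chasles f a b c). Qed.
Lemma RInt_swap_R (f : R -> R) a b : ex_RInt f a b -> RInt f b a = - RInt f a b.
Proof. intros H. exact (eq_sym (opp_RInt_swap f a b H)). Qed.

Lemma RInt_ext_0L (f g : R -> R) L : 0 <= L ->
  (forall x, 0 <= x <= L -> f x = g x) -> RInt f 0 L = RInt g 0 L.
Proof.
  intros HL H. apply RInt_ext. intros x Hx.
  rewrite Rmin_left, Rmax_right in Hx by lra. apply H; lra.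
Qed.

Lemma RInt_abs_le_0L (f g : R -> R) L : 0 <= L -> ex_RInt f 0 L -> ex_RInt g 0 L ->
  (forall x, 0 <= x <= L -> Rabs (f x) <= g x) -> Rabs (RInt f 0 L) <= RInt g 0 L.
Proof.
  intros HL Hf Hg H. eapply Rle_trans; [apply abs_RInt_le; auto |].
  apply RInt_le; auto. apply ex_RInt_norm; auto.
  intros; apply H; lra.
Qed.

Lemma continuous_bounded (g : R -> R) a b : a <= b -> (forall x, a <= x <= b -> continuous g x) ->
  exists B, 0 <= B /\ forall x, a <= x <= b -> Rabs (g x) <= B.
Proof.
  intros Hab Hc.
  destruct (continuity_ab_maj (fun x => Rabs (g x)) a b Hab) as [xm [HM _]].
  { intros; apply continuity_pt_filterlim, continuous_Rabs; auto. }
  exists (Rabs (g xm)). split; [apply Rabs_pos | auto].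
Qed.

Lemma RInt_eq0_nonneg L (g : R -> R) : 0 < L -> (forall x, continuous g x) ->
  (forall x, 0 <= x <= L -> 0 <= g x) -> RInt g 0 L = 0 -> forall x, 0 <= x <= L -> g x = 0.
Proof.
  intros HL Hc Hpos Hint x0 Hx0.
  destruct (Req_dec (g x0) 0) as [|Hne]; auto. exfalso.
  assert (Hg0 : 0 < g x0) by (destruct (Hpos x0 Hx0); auto; congruence).
  destruct (proj1 (continuous_R_eps g x0) (Hc x0) (g x0 / 2)) as [d [Hd Hy]]; [lra |].
  set (c := Rmax 0 (x0 - d / 2)). set (e := Rmin L (x0 + d / 2)).
  assert (Hc0 : 0 <= c) by apply Rmax_l. assert (Hc1 : x0 - d / 2 <= c) by apply Rmax_r.
  assert (HeL : e <= L) by apply Rmin_l. assert (He1 : e <= x0 + d / 2) by apply Rmin_r.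
  assert (Hce : c < e) by (unfold c, e; apply Rmax_case; apply Rmin_case; lra).
  assert (Hmid : 0 < RInt g c e).
  { apply RInt_gt_0; auto. intros x Hx.
    assert (Hxd : Rabs (x - x0) < d) by (apply Rabs_def1; lra).
    specialize (Hy x Hxd). apply Rabs_def2 in Hy. lra. }
  assert (H1 : 0 <= RInt g 0 c)
    by (apply RInt_ge_0; auto; [apply ex_RInt_Rcontinuous; auto | intros; apply Hpos; lra]).
  assert (H2 : 0 <= RInt g e L)
    by (apply RInt_ge_0; auto; [apply ex_RInt_Rcontinuous; auto | intros; apply Hpos; lra]).
  rewrite <- (RInt_Chasles_R g 0 c L), <- (RInt_Chasles_R g c e L) in Hint
    by (apply ex_RInt_Rcontinuous; auto).
  lra.
Qed.

(** * Periodic functions and convolution on the torus *)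

Lemma periodic_Derive L (f : R -> R) : periodic L f -> periodic L (Derive f).
Proof.
  unfold periodic, Derive. intros H x. f_equal. apply Lim_ext. intros y.
  replace (x + L + y) with ((x + y) + L) by ring. now rewrite !H.
Qed.

Lemma derive_zero_const (f : R -> R) : (forall x, is_derive f x 0) -> forall a b, f a = f b.
Proof.
  intros H a b.
  destruct (MVT_gen f a b (fun _ => 0)) as [c [_ Hc]].
  - intros; apply H.
  - intros; apply continuity_pt_filterlim. eapply is_derive_continuous. apply H.
  - lra.
Qed.

Lemma RInt_periodic_shift L (f : R -> R) : (forall x, continuous f x) -> periodic L f ->
  forall a, @eq R (RInt f a (a + L)) (RInt f 0 L).
Proof.
  intros Hc Hp.
  set (F := fun a => RInt f 0 (a + L) - RInt f 0 a).
  assert (HF : forall a, @eq R (RInt f a (a + L)) (F a)).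
  { intros a. unfold F.
    rewrite <- (RInt_Chasles_R f 0 a (a + L)) by (apply ex_RInt_Rcontinuous; auto).
    unfold Rminus. rewrite (Rplus_comm (RInt f 0 a)), Rplus_assoc, Rplus_opp_r, Rplus_0_r.
    reflexivity. }
  assert (Hprim : forall b, is_derive (RInt f 0) b (f b)).
  { intros b. apply (is_derive_RInt f (RInt f 0) 0 b); auto.
    apply filter_forall. intros; apply (RInt_correct (V := R_CompleteNormedModule)).
    apply ex_RInt_Rcontinuous; auto. }
  assert (HF' : forall x, is_derive F x 0).
  { intros x. apply (is_derive_eq _ _ (1 * f (x + L) - f x)); [| rewrite Hp; ring].
    apply (is_derive_minus (fun x => RInt f 0 (x + L)) (RInt f 0)); [| apply Hprim].
    apply (is_derive_comp (RInt f 0) (fun x => x + L)); [apply Hprim | auto_derive; auto]. }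
  intros a. rewrite HF, (derive_zero_const F HF' a 0), <- HF, Rplus_0_l. reflexivity.
Qed.

Lemma RInt_derive_periodic L (g dg : R -> R) : periodic L g ->
  (forall x, is_derive g x (dg x)) -> (forall x, continuous dg x) -> RInt dg 0 L = 0.
Proof.
  intros Hp Hd Hc.
  assert (H : is_RInt dg 0 L (minus (g L) (g 0)))
    by (apply (is_RInt_derive (V := R_CompleteNormedModule)); auto).
  replace (minus (g L) (g 0)) with 0 in H.
  - now apply (is_RInt_unique (V := R_CompleteNormedModule)).
  - unfold minus, plus, opp; simpl. rewrite <- (Rplus_0_l L) at 1. rewrite Hp. ring.
Qed.

Lemma RInt_reflect (f : R -> R) z a b : (forall x, continuous f x) ->
  @eq R (RInt (fun y => f (z - y)) a b) (- RInt f (z - a) (z - b)).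
Proof.
  intros Hf.
  assert (E := RInt_comp_lin f (-1) z a b (ex_RInt_Rcontinuous _ _ _ Hf)).
  replace (-1 * a + z) with (z - a) in E by ring.
  replace (-1 * b + z) with (z - b) in E by ring.
  rewrite <- E, (RInt_ext (fun y => scal (-1) (f (-1 * y + z))) (fun y => -1 * f (z - y))).
  - rewrite RInt_Rscal by (apply ex_RInt_Rcontinuous; intros; auto_cont).
    rewrite Ropp_mult_distr_l. replace (- -1) with 1 by ring. symmetry; apply Rmult_1_l.
  - intros y _. unfold scal; simpl; unfold mult; simpl. f_equal. f_equal. ring.
Qed.

Lemma conv_comm L (f g : R -> R) z :
  (forall x, continuous f x) -> (forall x, continuous g x) -> periodic L f -> periodic L g ->
  conv L f g z = conv L g f z.
Proof.
  intros Hf Hg Pf Pg. unfold conv.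
  set (k := fun w => g (z - w) * f w).
  assert (Hk : forall x, continuous k x) by (intros; unfold k; auto_cont).
  assert (Pk : periodic L k).
  { intros w; unfold k. rewrite Pf. f_equal. rewrite <- (Pg (z - (w + L))). f_equal; ring. }
  rewrite (RInt_ext _ (fun y => k (z - y))).
  2: { intros y _; unfold k. replace (z - (z - y)) with y by ring. apply Rmult_comm. }
  rewrite RInt_reflect, RInt_swap_R by (auto; apply ex_RInt_Rcontinuous; auto).
  rewrite <- (RInt_periodic_shift L k Hk Pk (z - L)).
  replace (z - L + L) with (z - 0) by ring. apply Ropp_involutive.
Qed.

Lemma conv_periodic L (f g : R -> R) : periodic L f -> periodic L (conv L f g).
Proof.
  intros Pf z. unfold conv. apply RInt_ext. intros y _.
  replace (z + L - y) with ((z - y) + L) by ring. now rewrite Pf.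
Qed.

Lemma is_derive_conv L (f g : R -> R) z :
  (forall x, ex_derive f x) -> (forall x, continuous (Derive f) x) -> (forall x, continuous g x) ->
  is_derive (conv L f g) z (conv L (Derive f) g z).
Proof.
  intros Hf Hdf Hg. unfold conv.
  assert (HD : forall y w, is_derive (fun w => f (w - y) * g y) w (Derive f (w - y) * g y)).
  { intros y w. auto_derive; [apply Hf | now rewrite Rmult_1_l]. }
  rewrite <- (RInt_ext (fun y => Derive (fun w => f (w - y) * g y) z)).
  2: { intros y _. apply is_derive_unique, HD. }
  apply (is_derive_RInt_param (fun w y => f (w - y) * g y)).
  - apply filter_forall. intros; eexists; apply HD.
  - intros y _. apply continuity_2d_pt_filterlim.
    apply (filterlim_ext (fun p : R * R => Derive f (fst p - snd p) * g (snd p))).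
    { intros p. symmetry. apply is_derive_unique, HD. }
    rewrite (is_derive_unique (fun w : R => f (w - y) * g y) z _ (HD y z)).
    change (Derive f (z - y) * g y)
      with ((fun p : R * R => Derive f (fst p - snd p) * g (snd p)) (z, y)).
    apply (continuous_mult (fun p : R * R => Derive f (fst p - snd p)) (fun p : R * R => g (snd p))).
    + apply (continuous_comp (fun p : R * R => fst p - snd p) (Derive f)); [| apply Hdf].
      apply (continuous_minus (@fst R R) (@snd R R)); [apply continuous_fst | apply continuous_snd].
    + apply (continuous_comp (@snd R R) g); [apply continuous_snd | apply Hg].
  - assert (Hfc : forall x, continuous f x)
      by (intros; eapply is_derive_continuous; apply Derive_correct, Hf).
    apply filter_forall. intros; apply ex_RInt_Rcontinuous. intros; auto_cont.
Qed.

Lemma conv_bound L (f g : R -> R) z M B : 0 <= L ->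
  (forall x, continuous f x) -> (forall x, continuous g x) ->
  (forall x, Rabs (f x) <= M) -> (forall y, 0 <= y <= L -> Rabs (g y) <= B) ->
  Rabs (conv L f g z) <= L * (M * B).
Proof.
  intros HL Hf Hg HM HB. unfold conv.
  replace (L * (M * B)) with ((L - 0) * (M * B)) by ring.
  apply abs_RInt_le_const; [lra | apply ex_RInt_Rcontinuous; intros; auto_cont |].
  intros y Hy. rewrite Rabs_mult. apply Rmult_le_compat; try apply Rabs_pos; auto.
Qed.

Lemma sumR_ext N f g : (forall i, (i < N)%nat -> f i = g i) -> sumR N f = sumR N g.
Proof. induction N; simpl; intros H; auto. rewrite IHN, H; auto. Qed.

Lemma sumR_le N f g : (forall i, (i < N)%nat -> f i <= g i) -> sumR N f <= sumR N g.
Proof.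
  induction N; simpl; intros H; [lra |].
  specialize (IHN (fun i Hi => H i ltac:(lia))). specialize (H N ltac:(lia)). lra.
Qed.

Lemma sumR_abs N f : Rabs (sumR N f) <= sumR N (fun i => Rabs (f i)).
Proof.
  induction N; simpl; [rewrite Rabs_R0; lra |].
  eapply Rle_trans; [apply Rabs_triang | lra].
Qed.

Lemma sumR_nonneg N f : (forall i, (i < N)%nat -> 0 <= f i) -> 0 <= sumR N f.
Proof.
  induction N; simpl; intros H; [lra |].
  specialize (IHN (fun i Hi => H i ltac:(lia))). specialize (H N ltac:(lia)). lra.
Qed.

Lemma sumR_pos N f : (1 <= N)%nat -> (forall i, (i < N)%nat -> 0 < f i) -> 0 < sumR N f.
Proof.
  destruct N as [|N]; [lia |]. intros _ H. simpl.
  assert (0 <= sumR N f) by (apply sumR_nonneg; intros; left; apply H; lia).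
  specialize (H N ltac:(lia)). lra.
Qed.

Lemma is_derive_sumR N (f : nat -> R -> R) (df : nat -> R) x :
  (forall j, (j < N)%nat -> is_derive (f j) x (df j)) ->
  is_derive (fun z => sumR N (fun j => f j z)) x (sumR N df).
Proof.
  induction N; simpl; intros H.
  - apply is_derive_Reals, derivable_pt_lim_const.
  - apply (is_derive_plus (fun z => sumR N (fun j => f j z)) (f N)).
    + apply IHN; intros; apply H; lia.
    + apply H; lia.
Qed.

Lemma continuous_sumR N (f : nat -> R -> R) x : (forall j, (j < N)%nat -> continuous (f j) x) ->
  continuous (fun z => sumR N (fun j => f j z)) x.
Proof.
  induction N; simpl; intros H; [apply continuous_Rconst |].
  apply continuous_Rplus; [apply IHN; intros; apply H; lia | apply H; lia].
Qed.

Lemma uniform_delta_lt N (Q : nat -> R -> Prop) :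
  (forall j, (j < N)%nat -> exists d, 0 < d /\ forall s, Rabs s < d -> Q j s) ->
  exists d, 0 < d /\ forall j, (j < N)%nat -> forall s, Rabs s < d -> Q j s.
Proof.
  induction N; intros H.
  - exists 1. split; [lra | intros; lia].
  - destruct IHN as [d1 [Hd1 H1]]; [intros; apply H; lia |].
    destruct (H N ltac:(lia)) as [d2 [Hd2 H2]].
    exists (Rmin d1 d2). split; [apply Rmin_pos; auto |].
    intros j Hj s Hs. pose proof (Rmin_l d1 d2). pose proof (Rmin_r d1 d2).
    destruct (Nat.eq_dec j N) as [->|Hne]; [apply H2 | apply H1]; lra || lia.
Qed.

Lemma uniform_bound_lt N (Q : nat -> R -> Prop) :
  (forall j, (j < N)%nat -> exists B, Q j B) -> (forall j B B', Q j B -> B <= B' -> Q j B') ->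
  exists B, forall j, (j < N)%nat -> Q j B.
Proof.
  intros H Hmon. induction N.
  - exists 0. intros; lia.
  - destruct IHN as [B1 H1]; [intros; apply H; lia |].
    destruct (H N ltac:(lia)) as [B2 H2].
    exists (Rmax B1 B2). intros j Hj. destruct (Nat.eq_dec j N) as [->|Hne].
    + eapply Hmon; [apply H2 | apply Rmax_r].
    + eapply Hmon; [apply H1; lia | apply Rmax_l].
Qed.

(** * The cube of the negative part *)

Definition quadratic_remainder (G G' : R -> R) (c : R) :=
  forall a b, Rabs (G a - G b - G' b * (a - b)) <= c * (Rabs a + Rabs b) * (a - b) ^ 2.

(* [negcube s = ((|s| - s) / 2) ^ 3], written so that its derivatives are visible. *)
Definition negcube (s : R) := (Rabs s * s ^ 2 - s ^ 3) / 2.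
Definition negcube' (s : R) := 3 * (Rabs s * s - s ^ 2) / 2.
Definition negcube'' (s : R) := 3 * (Rabs s - s).

Ltac Rabs_cases x :=
  destruct (Rle_or_lt 0 x); [rewrite (Rabs_pos_eq x) by lra | rewrite (Rabs_left x) by lra].

Lemma negcube_remainder : quadratic_remainder negcube negcube' 3.
Proof.
  intros a b. unfold negcube, negcube'. pose proof (pow2_ge_0 (a - b)).
  Rabs_cases a; Rabs_cases b; apply Rabs_le; split.
  all: try nra.
  all: try (assert (0 <= (a + b) * (a - b) ^ 2) by (apply Rmult_le_pos; lra); nra).
  all: try (assert (0 <= - (a + b) * (a - b) ^ 2) by (apply Rmult_le_pos; lra); nra).
Qed.

Lemma negcube'_remainder x y :
  Rabs (negcube' y - negcube' x - negcube'' x * (y - x)) <= 3 * (y - x) ^ 2.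
Proof.
  unfold negcube', negcube''. pose proof (pow2_ge_0 (y - x)).
  Rabs_cases x; Rabs_cases y; apply Rabs_le; split; nra.
Qed.

Lemma is_derive_negcube x : is_derive negcube x (negcube' x).
Proof.
  apply (is_derive_quadratic_remainder _ _ _ (3 * (2 * Rabs x + 1)));
    [pose proof (Rabs_pos x); lra |].
  intros y Hy. eapply Rle_trans; [apply negcube_remainder |].
  apply Rmult_le_compat_r; [apply pow2_ge_0 |].
  assert (Rabs y <= Rabs x + 1).
  { replace y with (x + (y - x)) by ring. eapply Rle_trans; [apply Rabs_triang | lra]. }
  lra.
Qed.

Lemma is_derive_negcube' x : is_derive negcube' x (negcube'' x).
Proof.
  apply (is_derive_quadratic_remainder _ _ _ 3); [lra |].
  intros y _. apply negcube'_remainder.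
Qed.

Lemma continuous_negcube x : continuous negcube x.
Proof. eapply is_derive_continuous, is_derive_negcube. Qed.
Lemma continuous_negcube' x : continuous negcube' x.
Proof. eapply is_derive_continuous, is_derive_negcube'. Qed.
Lemma continuous_negcube'' x : continuous negcube'' x.
Proof. unfold negcube''. auto_cont. Qed.

Lemma negcube_ge0 s : 0 <= negcube s.
Proof. unfold negcube. Rabs_cases s; nra. Qed.
Lemma negcube''_ge0 s : 0 <= negcube'' s.
Proof. unfold negcube''. Rabs_cases s; nra. Qed.
Lemma negcube'_mul s : negcube' s * s = 3 * negcube s.
Proof. unfold negcube, negcube'. field. Qed.
Lemma negcube_eq0_of_ge0 s : 0 <= s -> negcube s = 0.
Proof. intros; unfold negcube; rewrite Rabs_pos_eq by lra; field. Qed.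
Lemma ge0_of_negcube_eq0 s : negcube s = 0 -> 0 <= s.
Proof.
  unfold negcube. intros H. destruct (Rle_or_lt 0 s); [lra |].
  rewrite Rabs_left in H by lra.
  assert (0 < - s * (s * s)) by (apply Rmult_lt_0_compat; nra). nra.
Qed.

(** * Time derivatives of integral functionals *)

Definition sup_continuous_at (P : R -> Prop) (U : R -> R -> R) (t : R) :=
  forall eps, 0 < eps -> exists d, 0 < d /\
    forall s, P s -> Rabs (s - t) < d -> forall x, Rabs (U s x - U t x) < eps.

Definition continuous_within (P : R -> Prop) (phi : R -> R) :=
  forall t, P t -> forall eps, 0 < eps -> exists d, 0 < d /\
    forall s, P s -> Rabs (s - t) < d -> Rabs (phi s - phi t) < eps.

Lemma locally'_lim0_eps (F : R -> R) t : filterlim F (locally' t) (locally 0) ->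
  forall eps, 0 < eps -> exists d, 0 < d /\
    forall s, s <> t -> Rabs (s - t) < d -> Rabs (F s) < eps.
Proof.
  intros H eps He. destruct (proj1 (filterlim_locally F 0) H (mkposreal eps He)) as [d Hd].
  exists d; split; [apply cond_pos |]. intros s Hs Hd'.
  specialize (Hd s Hd' Hs). unfold ball in Hd; simpl in Hd.
  unfold AbsRing_ball, abs, minus, plus, opp in Hd; simpl in Hd.
  now rewrite Ropp_0, Rplus_0_r in Hd.
Qed.

Lemma mult_div_succ_le a e : 0 <= a -> 0 <= e -> a * (e / (a + 1)) <= e.
Proof.
  intros Ha He. replace (a * (e / (a + 1))) with (e - e / (a + 1)) by (field; lra).
  assert (0 <= e / (a + 1)) by (apply Rdiv_le_0_compat; lra). lra.
Qed.

Lemma Rabs_le_young e al : 0 < al -> Rabs e <= al / 2 + / (2 * al) * e ^ 2.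
Proof.
  intros Hal. rewrite <- (pow2_abs e). pose proof (pow2_ge_0 (al - Rabs e)).
  apply (Rmult_le_reg_l (2 * al)); [lra |].
  replace (2 * al * (al / 2 + / (2 * al) * Rabs e ^ 2)) with (al * al + Rabs e ^ 2)
    by (field; lra).
  nra.
Qed.

Lemma quadratic_remainder_near G G' c a0 a1 BU : 0 <= c -> quadratic_remainder G G' c ->
  Rabs a0 <= BU -> Rabs (a1 - a0) <= 1 ->
  Rabs (G a1 - G a0 - G' a0 * (a1 - a0)) <= c * (2 * BU + 1) * (a1 - a0) ^ 2.
Proof.
  intros Hc HR H0 H1. eapply Rle_trans; [apply HR |].
  apply Rmult_le_compat_r; [apply pow2_ge_0 | apply Rmult_le_compat_l; [auto |]].
  assert (Rabs a1 <= BU + 1).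
  { replace a1 with (a0 + (a1 - a0)) by ring. eapply Rle_trans; [apply Rabs_triang | lra]. }
  lra.
Qed.

Lemma increment_bound G G' c a0 a1 BU BG eta : 0 <= c -> quadratic_remainder G G' c ->
  Rabs a0 <= BU -> Rabs (G' a0) <= BG -> Rabs (a1 - a0) < eta -> eta <= 1 ->
  Rabs (G a1 - G a0) <= (BG + c * (2 * BU + 1)) * eta.
Proof.
  intros Hc HR H0 HG Hd He.
  assert (Hrem := quadratic_remainder_near G G' c a0 a1 BU Hc HR H0 ltac:(lra)).
  assert (Hk : 0 <= c * (2 * BU + 1)) by (pose proof (Rabs_pos a0); apply Rmult_le_pos; lra).
  assert (Hsq : (a1 - a0) ^ 2 <= eta)
    by (rewrite <- pow2_abs; pose proof (Rabs_pos (a1 - a0)); nra).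
  assert (Hlin : Rabs (G' a0 * (a1 - a0)) <= BG * eta).
  { rewrite Rabs_mult. apply Rmult_le_compat; try apply Rabs_pos; lra. }
  replace (G a1 - G a0) with ((G a1 - G a0 - G' a0 * (a1 - a0)) + G' a0 * (a1 - a0)) by ring.
  eapply Rle_trans; [apply Rabs_triang |].
  assert (c * (2 * BU + 1) * (a1 - a0) ^ 2 <= c * (2 * BU + 1) * eta)
    by (apply Rmult_le_compat_l; auto).
  lra.
Qed.

Lemma difference_quotient_bound G G' c a0 a1 BU BG eta h r : 0 <= c ->
  quadratic_remainder G G' c ->
  Rabs a0 <= BU -> Rabs (G' a0) <= BG -> Rabs (a1 - a0) < eta -> eta <= 1 -> h <> 0 ->
  Rabs ((G a1 - G a0) / h - G' a0 * r) <=
    (BG + c * (2 * BU + 1)) * Rabs ((a1 - a0) / h - r) + c * (2 * BU + 1) * eta * Rabs r.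
Proof.
  intros Hc HR H0 HG Hd He Hh.
  assert (Hrem := quadratic_remainder_near G G' c a0 a1 BU Hc HR H0 ltac:(lra)).
  set (k := c * (2 * BU + 1)) in *.
  assert (Hk : 0 <= k) by (unfold k; pose proof (Rabs_pos a0); apply Rmult_le_pos; lra).
  set (e := (a1 - a0) / h - r).
  set (Rm := G a1 - G a0 - G' a0 * (a1 - a0)) in *.
  assert (Hah : 0 < Rabs h) by (apply Rabs_pos_lt; auto).
  assert (Hd' : Rabs (a1 - a0) = Rabs h * Rabs (e + r))
    by (rewrite <- Rabs_mult; f_equal; unfold e; field; auto).
  assert (Her : Rabs (e + r) <= Rabs e + Rabs r) by apply Rabs_triang.
  assert (HRm : Rabs (Rm / h) <= k * eta * (Rabs e + Rabs r)).
  { unfold Rdiv. rewrite Rabs_mult, Rabs_inv.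
    apply (Rmult_le_reg_r (Rabs h)); [auto |].
    rewrite Rmult_assoc, Rinv_l, Rmult_1_r by lra.
    eapply Rle_trans; [apply Hrem |].
    rewrite <- pow2_abs, Hd'.
    replace (k * (Rabs h * Rabs (e + r)) ^ 2)
      with (k * Rabs h * ((Rabs h * Rabs (e + r)) * Rabs (e + r))) by ring.
    replace (k * eta * (Rabs e + Rabs r) * Rabs h)
      with (k * Rabs h * (eta * (Rabs e + Rabs r))) by ring.
    apply Rmult_le_compat_l; [apply Rmult_le_pos; lra |].
    pose proof (Rabs_pos (e + r)). apply Rmult_le_compat; try lra.
    apply Rmult_le_pos; [lra | apply Rabs_pos]. }
  assert (HGe : Rabs (G' a0 * e) <= BG * Rabs e)
    by (rewrite Rabs_mult; apply Rmult_le_compat_r; [apply Rabs_pos | auto]).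
  assert (Hke : k * eta * Rabs e <= k * Rabs e)
    by (rewrite Rmult_assoc; apply Rmult_le_compat_l; [auto | pose proof (Rabs_pos e); nra]).
  replace ((G a1 - G a0) / h - G' a0 * r) with (G' a0 * e + Rm / h) by (unfold e, Rm; field; auto).
  eapply Rle_trans; [apply Rabs_triang | nra].
Qed.

Section IntegralFunctional.

Variables (L c : R) (G G' : R -> R) (P : R -> Prop) (U : R -> R -> R).
Hypotheses (HL : 0 <= L) (Hc : 0 <= c)
  (HG : forall x, continuous G x) (HG' : forall x, continuous G' x)
  (Hrem : quadratic_remainder G G' c) (HU : forall s, P s -> forall x, continuous (U s) x).

Lemma continuous_within_integral :
  (forall t, P t -> sup_continuous_at P U t) ->
  continuous_within P (fun s => RInt (fun x => G (U s x)) 0 L).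
Proof.
  intros Hsup t Pt eps Heps.
  assert (HUt := HU t Pt).
  destruct (continuous_bounded (U t) 0 L) as [BU [HBU0 HBU]]; [lra | auto |].
  destruct (continuous_bounded (fun x => G' (U t x)) 0 L) as [BG [HBG0 HBG]];
    [lra | intros; auto_cont |].
  set (A := BG + c * (2 * BU + 1)).
  assert (HA : 0 <= A) by (unfold A; assert (0 <= c * (2 * BU + 1)) by (apply Rmult_le_pos; lra); lra).
  set (eta := Rmin 1 (eps / 2 / (L * A + 1))).
  assert (Heta : 0 < eta) by (apply Rmin_pos; [lra | apply Rdiv_lt_0_compat; nra]).
  assert (Heta1 : eta <= 1) by apply Rmin_l.
  assert (Heta2 : eta <= eps / 2 / (L * A + 1)) by apply Rmin_r.
  destruct (Hsup t Pt eta Heta) as [d [Hd HdU]]. exists d. split; [auto |]. intros s Ps Hs.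
  assert (HUs := HU s Ps).
  rewrite <- RInt_Rminus by (apply ex_RInt_Rcontinuous; intros; auto_cont).
  eapply Rle_lt_trans.
  - apply (abs_RInt_le_const _ 0 L (A * eta)); [lra | apply ex_RInt_Rcontinuous; intros; auto_cont |].
    intros x Hx. apply (increment_bound G G' c); auto.
  - assert (L * A * eta <= L * A * (eps / 2 / (L * A + 1)))
      by (apply Rmult_le_compat_l; [apply Rmult_le_pos |]; lra).
    pose proof (mult_div_succ_le (L * A) (eps / 2) ltac:(nra) ltac:(lra)). nra.
Qed.

(* Young's inequality with weight [al] turns the L^2 convergence of the difference
   quotients into the L^1 control needed here. *)
Lemma difference_quotient_integral_bound t s r BU BG eta al :
  P s -> P t -> s <> t -> (forall x, continuous r x) ->
  (forall x, 0 <= x <= L -> Rabs (U t x) <= BU) ->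
  (forall x, 0 <= x <= L -> Rabs (G' (U t x)) <= BG) ->
  (forall x, Rabs (U s x - U t x) < eta) -> eta <= 1 -> 0 < al ->
  let A := BG + c * (2 * BU + 1) in
  Rabs ((RInt (fun x => G (U s x)) 0 L - RInt (fun x => G (U t x)) 0 L) / (s - t)
        - RInt (fun x => G' (U t x) * r x) 0 L)
  <= L * A / 2 * al
     + A / (2 * al) * RInt (fun x => ((U s x - U t x) / (s - t) - r x) ^ 2) 0 L
     + c * (2 * BU + 1) * RInt (fun x => Rabs (r x)) 0 L * eta.
Proof.
  intros Ps Pt Hst Hr HBU HBG HdU Heta Hal A.
  assert (HUs := HU s Ps). assert (HUt := HU t Pt).
  assert (HBU0 : 0 <= BU) by (eapply Rle_trans; [apply Rabs_pos | apply (HBU 0); lra]).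
  assert (HBG0 : 0 <= BG) by (eapply Rle_trans; [apply Rabs_pos | apply (HBG 0); lra]).
  assert (Hk : 0 <= c * (2 * BU + 1)) by (apply Rmult_le_pos; lra).
  assert (HA : 0 <= A) by (unfold A; lra).
  assert (Hts : s - t <> 0) by lra.
  rewrite <- RInt_Rminus, <- RInt_Rdiv, <- RInt_Rminus
    by (apply ex_RInt_Rcontinuous; intros; auto_cont).
  eapply Rle_trans.
  - apply (RInt_abs_le_0L _ (fun x => A * al / 2
        + A / (2 * al) * ((U s x - U t x) / (s - t) - r x) ^ 2
        + c * (2 * BU + 1) * eta * Rabs (r x))); auto;
      try (apply ex_RInt_Rcontinuous; intros; auto_cont).
    intros x Hx. eapply Rle_trans; [apply (difference_quotient_bound G G' c); auto |].
    apply Rplus_le_compat_r.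
    replace (A * al / 2 + A / (2 * al) * ((U s x - U t x) / (s - t) - r x) ^ 2)
      with (A * (al / 2 + / (2 * al) * ((U s x - U t x) / (s - t) - r x) ^ 2)) by (field; lra).
    apply Rmult_le_compat_l; [auto | apply Rabs_le_young; auto].
  - rewrite !RInt_Rplus, RInt_Rconst, !RInt_Rscal
      by (apply ex_RInt_Rcontinuous; intros; auto_cont).
    apply Req_le. field. lra.
Qed.

Lemma is_derive_integral t r :
  (forall x, continuous r x) -> (exists d, 0 < d /\ forall s, Rabs (s - t) < d -> P s) ->
  sup_continuous_at P U t ->
  filterlim (fun s => RInt (fun x => ((U s x - U t x) / (s - t) - r x) ^ 2) 0 L)
    (locally' t) (locally 0) ->
  is_derive (fun s => RInt (fun x => G (U s x)) 0 L) t (RInt (fun x => G' (U t x) * r x) 0 L).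
Proof.
  intros Hr [d3 [Hd3 HP]] Hsup Hlim.
  assert (Pt : P t) by (apply HP; rewrite Rminus_diag, Rabs_R0; auto).
  assert (HUt := HU t Pt).
  destruct (continuous_bounded (U t) 0 L) as [BU [HBU0 HBU]]; [lra | auto |].
  destruct (continuous_bounded (fun x => G' (U t x)) 0 L) as [BG [HBG0 HBG]];
    [lra | intros; auto_cont |].
  set (k := c * (2 * BU + 1)). set (A := BG + k).
  set (Ir := RInt (fun x => Rabs (r x)) 0 L).
  assert (Hk : 0 <= k) by (unfold k; apply Rmult_le_pos; lra).
  assert (HA : 0 <= A) by (unfold A; lra).
  assert (HIr : 0 <= Ir)
    by (apply RInt_ge_0; auto; [apply ex_RInt_Rcontinuous; intros; auto_cont | intros; apply Rabs_pos]).
  apply is_derive_Reals. intros eps Heps.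
  set (al := eps / 4 / (L * A / 2 + 1)).
  assert (Hal : 0 < al) by (apply Rdiv_lt_0_compat; nra).
  set (Et := eps / 4 / (A / (2 * al) + 1)).
  assert (HAal : 0 <= A / (2 * al)) by (apply Rdiv_le_0_compat; lra).
  assert (HEt : 0 < Et) by (apply Rdiv_lt_0_compat; lra).
  set (eta := Rmin 1 (eps / 4 / (k * Ir + 1))).
  assert (Heta : 0 < eta) by (apply Rmin_pos; [lra | apply Rdiv_lt_0_compat; nra]).
  assert (Heta1 : eta <= 1) by apply Rmin_l.
  assert (Heta2 : eta <= eps / 4 / (k * Ir + 1)) by apply Rmin_r.
  destruct (locally'_lim0_eps _ t Hlim Et HEt) as [d1 [Hd1 HE]].
  destruct (Hsup eta Heta) as [d2 [Hd2 HdU]].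
  assert (Hd : 0 < Rmin d1 (Rmin d2 d3)) by (repeat apply Rmin_pos; auto).
  exists (mkposreal _ Hd). intros h Hh0 Hh. simpl in Hh.
  pose proof (Rmin_l d1 (Rmin d2 d3)). pose proof (Rmin_r d1 (Rmin d2 d3)).
  pose proof (Rmin_l d2 d3). pose proof (Rmin_r d2 d3).
  set (s := t + h). replace h with (s - t) by (unfold s; ring).
  assert (Hs : Rabs (s - t) = Rabs h) by (unfold s; f_equal; ring).
  assert (Ps : P s) by (apply HP; lra).
  assert (Hst : s <> t) by (unfold s; lra).
  specialize (HE s Hst ltac:(lra)).
  eapply Rle_lt_trans.
  { apply (difference_quotient_integral_bound t s r BU BG eta al); auto.
    intros x. apply HdU; auto; lra. }
  fold k A Ir.
  set (E := RInt (fun x => ((U s x - U t x) / (s - t) - r x) ^ 2) 0 L) in *.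
  assert (HE' : E <= Et) by (pose proof (Rle_abs E); lra).
  assert (T1 : L * A / 2 * al <= eps / 4) by (apply mult_div_succ_le; nra).
  assert (T2 : A / (2 * al) * E <= eps / 4).
  { eapply Rle_trans; [apply Rmult_le_compat_l; [auto | apply HE'] |].
    apply mult_div_succ_le; lra. }
  assert (T3 : k * Ir * eta <= eps / 4).
  { eapply Rle_trans; [apply Rmult_le_compat_l; [nra | apply Heta2] |].
    apply mult_div_succ_le; nra. }
  lra.
Qed.

End IntegralFunctional.

(** * Gronwall and continuation arguments *)

Definition clamp a b y := Rmin b (Rmax a y).

Lemma clamp_in a b y : a <= b -> a <= clamp a b y <= b.
Proof. intros. unfold clamp, Rmin, Rmax. repeat destruct Rle_dec; lra. Qed.

Lemma clamp_id a b y : a <= y <= b -> clamp a b y = y.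
Proof. intros. unfold clamp, Rmin, Rmax. repeat destruct Rle_dec; lra. Qed.

Lemma clamp_lipschitz a b x y : a <= b -> Rabs (clamp a b y - clamp a b x) <= Rabs (y - x).
Proof.
  intros. pose proof (Rle_abs (y - x)). pose proof (Rle_abs (- (y - x))).
  rewrite Rabs_Ropp in *. unfold clamp, Rmin, Rmax.
  repeat destruct Rle_dec; apply Rabs_le; split; lra.
Qed.

Lemma continuous_clamp a b x : a <= b -> continuous (clamp a b) x.
Proof.
  intros Hab. apply continuous_R_eps. intros eps He. exists eps. split; [auto |].
  intros y Hy. eapply Rle_lt_trans; [apply clamp_lipschitz |]; auto.
Qed.

Lemma continuous_comp_clamp (phi : R -> R) a b : a <= b ->
  continuous_within (fun s => a <= s <= b) phi -> forall x, continuous (fun y => phi (clamp a b y)) x.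
Proof.
  intros Hab Hw x. apply continuous_R_eps. intros eps He.
  destruct (Hw (clamp a b x) (clamp_in a b x Hab) eps He) as [d [Hd H]].
  exists d. split; [auto |]. intros y Hy. apply H; [apply clamp_in; auto |].
  eapply Rle_lt_trans; [apply clamp_lipschitz |]; auto.
Qed.

Lemma locally_open_interval a b x (Q : R -> Prop) :
  a < x < b -> (forall y, a < y < b -> Q y) -> locally x Q.
Proof. intros Hx H. apply (locally_interval _ x a b); simpl; try lra. intros; apply H; lra. Qed.

Lemma gronwall_zero (phi : R -> R) a b C :
  a < b -> continuous_within (fun s => a <= s <= b) phi ->
  (forall t, a < t < b -> exists dphi, is_derive phi t dphi /\ dphi <= C * phi t) ->
  phi a = 0 -> (forall t, a <= t <= b -> 0 <= phi t) ->
  forall t, a <= t <= b -> phi t = 0.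
Proof.
  intros Hab Hw Hd Ha Hpos t Ht.
  destruct (Req_dec t a) as [-> | Hta]; auto.
  (* [phi t * exp (- C (t - a))] is nonincreasing; clamping extends it continuously to [R]. *)
  set (chi := fun y => phi (clamp a b y) * exp (- C * (clamp a b y - a))).
  assert (Cphi := continuous_comp_clamp phi a b ltac:(lra) Hw).
  assert (Ccl : forall z, continuous (clamp a b) z) by (intros; apply continuous_clamp; lra).
  assert (Cexp : forall z, continuous exp z) by apply continuous_exp.
  destruct (MVT_gen chi a t (fun x => Rmin 0 (Derive chi x))) as [xi [Hxi E]].
  - intros x Hx. rewrite Rmin_left, Rmax_right in Hx by lra.
    destruct (Hd x ltac:(lra)) as [dphi [Hdphi Hle]].
    assert (HD : is_derive chi x ((dphi - C * phi x) * exp (- C * (x - a)))).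
    { apply (is_derive_ext_loc (fun y => phi y * exp (- C * (y - a)))).
      - apply (locally_open_interval a b); [lra |].
        intros y Hy. unfold chi. rewrite clamp_id by lra. reflexivity.
      - eapply is_derive_eq; [apply is_derive_Rmult; [apply Hdphi | auto_derive; auto] |].
        cbv beta. replace (x + - a) with (x - a) by ring. ring. }
    rewrite (is_derive_unique _ _ _ HD), Rmin_right; [auto |].
    assert (0 < exp (- C * (x - a))) by apply exp_pos.
    apply Rmult_le_0_r; lra.
  - intros x _. apply continuity_pt_filterlim. change (continuous chi x). unfold chi. auto_cont.
  - rewrite Rmin_left, Rmax_right in Hxi by lra.
    assert (Hr : Rmin 0 (Derive chi xi) <= 0) by apply Rmin_l.
    set (r := Rmin 0 (Derive chi xi)) in *. unfold chi in E. rewrite !clamp_id, Ha in E by lra.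
    assert (Hexp : 0 < exp (- C * (t - a))) by apply exp_pos.
    specialize (Hpos t Ht). assert (r * (t - a) <= 0) by nra. nra.
Qed.

Lemma constant_of_derive_zero (phi : R -> R) a b :
  a < b -> continuous_within (fun s => a <= s <= b) phi ->
  (forall t, a < t < b -> is_derive phi t 0) ->
  forall t, a <= t <= b -> phi t = phi a.
Proof.
  intros Hab Hw Hd t Ht.
  destruct (Req_dec t a) as [-> | Hta]; auto.
  set (chi := fun y => phi (clamp a b y)).
  assert (Cphi := continuous_comp_clamp phi a b ltac:(lra) Hw).
  destruct (MVT_gen chi a t (fun _ => 0)) as [xi [Hxi E]].
  - intros x Hx. rewrite Rmin_left, Rmax_right in Hx by lra.
    apply (is_derive_ext_loc phi); [| apply Hd; lra].
    apply (locally_open_interval a b); [lra |].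
    intros y Hy. unfold chi. rewrite clamp_id by lra. reflexivity.
  - intros x _. apply continuity_pt_filterlim, Cphi.
  - unfold chi in E. rewrite !clamp_id in E by lra. lra.
Qed.

Lemma continuation_zero (phi : R -> R) T :
  0 < T -> continuous_within (fun s => 0 <= s < T) phi -> phi 0 = 0 ->
  (forall t0, 0 <= t0 < T -> phi t0 = 0 ->
     exists d, 0 < d /\ forall s, t0 <= s < T -> s < t0 + d -> phi s = 0) ->
  forall t, 0 <= t < T -> phi t = 0.
Proof.
  intros HT Hw H0 Hstep.
  set (A := fun x => 0 <= x < T /\ forall s, 0 <= s <= x -> phi s = 0).
  assert (HA0 : A 0) by (split; [lra | intros s Hs; replace s with 0 by lra; auto]).
  assert (Hb : bound A) by (exists T; intros x [Hx _]; lra).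
  destruct (completeness A Hb (ex_intro _ 0 HA0)) as [m [Hub Hlub]].
  assert (Hm0 : 0 <= m) by (apply Hub; auto).
  assert (HmT : m <= T) by (apply Hlub; intros x [Hx _]; lra).
  assert (Hbelow : forall s, 0 <= s < m -> phi s = 0).
  { intros s Hs. destruct (classic (exists x, A x /\ s < x)) as [[x [[_ Hx] Hsx]] | Hn].
    - apply Hx; lra.
    - exfalso. enough (m <= s) by lra. apply Hlub. intros x Hx.
      destruct (Rle_or_lt x s); auto. exfalso; eauto. }
  assert (Hm : phi m = 0 \/ m = T).
  { destruct (Req_dec m T) as [| HmT']; [auto | left].
    destruct (Req_dec m 0) as [-> | Hm0']; [auto |].
    destruct (Req_dec (phi m) 0) as [| Hne]; [auto | exfalso].
    assert (Hpm : 0 < Rabs (phi m)) by (apply Rabs_pos_lt; auto).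
    destruct (Hw m ltac:(lra) _ Hpm) as [d [Hd Hc]].
    set (s := Rmax 0 (m - d / 2)).
    assert (Hs : 0 <= s /\ m - d / 2 <= s) by (split; [apply Rmax_l | apply Rmax_r]).
    assert (Hsm : s < m) by (unfold s; apply Rmax_case; lra).
    specialize (Hc s ltac:(lra) ltac:(apply Rabs_def1; lra)).
    rewrite Hbelow, Rminus_0_l, Rabs_Ropp in Hc by lra. lra. }
  assert (HmT' : m = T).
  { destruct (Req_dec m T) as [| HmT']; [auto | exfalso].
    destruct Hm as [Hphim | ]; [| contradiction].
    destruct (Hstep m ltac:(lra) Hphim) as [d [Hd Hz]].
    set (x := Rmin (m + d / 2) ((m + T) / 2)).
    assert (Hx : x <= m + d / 2 /\ x <= (m + T) / 2) by (split; [apply Rmin_l | apply Rmin_r]).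
    assert (Hmx : m < x) by (unfold x; apply Rmin_case; lra).
    assert (HAx : A x).
    { split; [lra |]. intros s Hs.
      destruct (Rlt_or_le s m); [apply Hbelow | apply Hz]; lra. }
    specialize (Hub x HAx). lra. }
  intros t Ht. apply Hbelow. lra.
Qed.

(** * The equation: velocity field, conservation and negative-part energy *)

Section C2Periodic.

Variables (L : R) (f : R -> R).
Hypothesis Hf : C2per L f.

Lemma C2per_is_derive x : is_derive f x (Derive f x).
Proof. apply Derive_correct, Hf. Qed.
Lemma C2per_is_derive2 x : is_derive (Derive f) x (Derive (Derive f) x).
Proof. apply Derive_correct, Hf. Qed.
Lemma C2per_ex_derive x : ex_derive f x.
Proof. apply Hf. Qed.
Lemma C2per_continuous x : continuous f x.
Proof. eapply is_derive_continuous, C2per_is_derive. Qed.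
Lemma C2per_continuous1 x : continuous (Derive f) x.
Proof. eapply is_derive_continuous, C2per_is_derive2. Qed.
Lemma C2per_continuous2 x : continuous (Derive (Derive f)) x.
Proof. apply Hf. Qed.
Lemma C2per_periodic1 : periodic L (Derive f).
Proof. apply periodic_Derive, Hf. Qed.

End C2Periodic.

(* [velocity] is the advection velocity [d/dx sum_j h_ij (K * u_j)] and [velocity'] its
   derivative.  As [K''] need not be continuous, the commutativity of [conv] is used to put
   each derivative on a factor whose derivative is continuous. *)
Definition velocity L N (h : nat -> nat -> R) K (u : nat -> R -> R -> R) s i z :=
  sumR N (fun j => h i j * conv L (Derive (u j s)) K z).
Definition velocity' L N (h : nat -> nat -> R) K (u : nat -> R -> R -> R) s i z :=
  sumR N (fun j => h i j * conv L (Derive K) (Derive (u j s)) z).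

Section Equation.

Variables (L : R) (N : nat) (D : nat -> R) (h : nat -> nat -> R) (K : R -> R)
  (u : nat -> R -> R -> R) (s : R).
Hypotheses (HKper : periodic L K) (HK1 : forall x, ex_derive K x)
  (HK2 : forall x, ex_derive (Derive K) x) (Hu : forall j, (j < N)%nat -> C2per L (u j s)).

Let continuous_K x : continuous K x.
Proof. eapply is_derive_continuous, Derive_correct, HK1. Qed.
Let continuous_DK x : continuous (Derive K) x.
Proof. eapply is_derive_continuous, Derive_correct, HK2. Qed.

Lemma is_derive_potential i z :
  is_derive (fun z => sumR N (fun j => h i j * conv L K (u j s) z)) z
    (velocity L N h K u s i z).
Proof.
  apply (is_derive_sumR N (fun j z => h i j * conv L K (u j s) z)). intros j Hj.
  apply (is_derive_eq _ _ (h i j * conv L (Derive (u j s)) K z)); [| reflexivity].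
  apply (is_derive_ext (fun z => h i j * conv L (u j s) K z)).
  { intros y. f_equal. apply conv_comm; auto; [apply (C2per_continuous L) | apply Hu]; auto. }
  apply (is_derive_scal (conv L (u j s) K)), is_derive_conv; auto.
  - apply (C2per_ex_derive L), Hu; auto.
  - apply (C2per_continuous1 L), Hu; auto.
Qed.

Lemma is_derive_velocity i z : is_derive (velocity L N h K u s i) z (velocity' L N h K u s i z).
Proof.
  apply (is_derive_sumR N (fun j z => h i j * conv L (Derive (u j s)) K z)). intros j Hj.
  apply (is_derive_eq _ _ (h i j * conv L (Derive K) (Derive (u j s)) z)); [| reflexivity].
  apply (is_derive_ext (fun z => h i j * conv L K (Derive (u j s)) z)).
  { intros y. f_equal. apply conv_comm; auto.
    - apply (C2per_continuous1 L), Hu; auto.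
    - apply (C2per_periodic1 L), Hu; auto. }
  apply (is_derive_scal (conv L K (Derive (u j s)))), is_derive_conv; auto.
  apply (C2per_continuous1 L), Hu; auto.
Qed.

Lemma continuous_velocity' i z : continuous (velocity' L N h K u s i) z.
Proof.
  apply (continuous_sumR N (fun j z => h i j * conv L (Derive K) (Derive (u j s)) z)).
  intros j Hj. apply continuous_Rmult; [apply continuous_Rconst |].
  assert (C1 := C2per_continuous1 L _ (Hu j Hj)).
  apply (continuous_ext (conv L (Derive (u j s)) (Derive K))).
  { intros y. apply conv_comm; auto; apply periodic_Derive; [apply (proj1 (Hu j Hj)) | auto]. }
  eapply is_derive_continuous, is_derive_conv; auto.
  - intros y. exists (Derive (Derive (u j s)) y). apply (C2per_is_derive2 L), Hu; auto.
  - apply (C2per_continuous2 L), Hu; auto.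
Qed.

Lemma continuous_velocity i z : continuous (velocity L N h K u s i) z.
Proof. eapply is_derive_continuous, is_derive_velocity. Qed.

Lemma periodic_velocity i : periodic L (velocity L N h K u s i).
Proof.
  intros z. apply sumR_ext. intros j Hj. f_equal.
  apply conv_periodic, (C2per_periodic1 L), Hu; auto.
Qed.

Lemma velocity'_bound i M (B : nat -> R) : 0 <= L -> (forall x, Rabs (Derive K x) <= M) ->
  (forall j, (j < N)%nat -> forall y, 0 <= y <= L -> Rabs (Derive (u j s) y) <= B j) ->
  forall z, Rabs (velocity' L N h K u s i z) <= sumR N (fun j => Rabs (h i j) * (L * (M * B j))).
Proof.
  intros HL HM HB z. eapply Rle_trans; [apply sumR_abs | apply sumR_le]. intros j Hj.
  rewrite Rabs_mult. apply Rmult_le_compat_l; [apply Rabs_pos |].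
  apply conv_bound; auto. apply (C2per_continuous1 L), Hu; auto.
Qed.

Lemma rhs_expand i x : (i < N)%nat ->
  rhs L N D h K u i s x = D i * Derive (Derive (u i s)) x
    - (Derive (u i s) x * velocity L N h K u s i x + u i s x * velocity' L N h K u s i x).
Proof.
  intros Hi. unfold rhs. f_equal. f_equal.
  rewrite (Derive_ext _ (fun y => u i s y * velocity L N h K u s i y)).
  2: { intros y. f_equal. apply is_derive_unique, is_derive_potential. }
  apply is_derive_unique, is_derive_Rmult.
  - apply (C2per_is_derive L), Hu; auto.
  - apply is_derive_velocity.
Qed.

Lemma continuous_rhs i x : (i < N)%nat -> continuous (rhs L N D h K u i s) x.
Proof.
  intros Hi.
  apply (continuous_ext (fun x => D i * Derive (Derive (u i s)) x
    - (Derive (u i s) x * velocity L N h K u s i x + u i s x * velocity' L N h K u s i x))).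
  { intros y; symmetry; apply rhs_expand; auto. }
  assert (C0 := C2per_continuous L _ (Hu i Hi)).
  assert (C1 := C2per_continuous1 L _ (Hu i Hi)).
  assert (C2 := C2per_continuous2 L _ (Hu i Hi)).
  assert (CV := continuous_velocity i). assert (CV' := continuous_velocity' i).
  auto_cont.
Qed.

Lemma RInt_rhs i : (i < N)%nat -> @eq R (RInt (rhs L N D h K u i s) 0 L) 0.
Proof.
  intros Hi.
  set (U := u i s). set (V := velocity L N h K u s i). set (V' := velocity' L N h K u s i).
  assert (C0 := C2per_continuous L _ (Hu i Hi)). assert (C1 := C2per_continuous1 L _ (Hu i Hi)).
  assert (C2 := C2per_continuous2 L _ (Hu i Hi)).
  assert (CV := continuous_velocity i). assert (CV' := continuous_velocity' i).
  fold U V V' in C0, C1, C2, CV, CV'.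
  rewrite (RInt_ext _ (fun x => D i * Derive (Derive U) x - (Derive U x * V x + U x * V' x)))
    by (intros; apply rhs_expand; auto).
  rewrite RInt_Rminus, RInt_Rscal by (apply ex_RInt_Rcontinuous; intros; auto_cont).
  rewrite (RInt_derive_periodic L (Derive U) (Derive (Derive U))), 
    (RInt_derive_periodic L (fun y => U y * V y) (fun x => Derive U x * V x + U x * V' x)).
  - ring.
  - intros y. unfold U, V. rewrite (proj1 (Hu i Hi)), periodic_velocity. reflexivity.
  - intros y. apply is_derive_Rmult; [apply (C2per_is_derive L), Hu | apply is_derive_velocity]; auto.
  - intros; auto_cont.
  - apply (C2per_periodic1 L), Hu; auto.
  - apply (C2per_is_derive2 L), Hu; auto.
  - auto.
Qed.

Lemma negcube_energy_identity i : (i < N)%nat ->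
  @eq R (RInt (fun x => negcube' (u i s x) * rhs L N D h K u i s x) 0 L)
    (- D i * RInt (fun x => negcube'' (u i s x) * Derive (u i s) x ^ 2) 0 L
     - 2 * RInt (fun x => negcube (u i s x) * velocity' L N h K u s i x) 0 L).
Proof.
  intros Hi.
  set (U := u i s). set (V := velocity L N h K u s i). set (V' := velocity' L N h K u s i).
  set (U1 := Derive U). set (U2 := Derive U1).
  assert (D1 := C2per_is_derive L _ (Hu i Hi)). assert (D2 := C2per_is_derive2 L _ (Hu i Hi)).
  assert (C0 := C2per_continuous L _ (Hu i Hi)). assert (C1 := C2per_continuous1 L _ (Hu i Hi)).
  assert (C2 := C2per_continuous2 L _ (Hu i Hi)).
  assert (CV := continuous_velocity i). assert (CV' := continuous_velocity' i).
  fold U V V' U1 U2 in D1, D2, C0, C1, C2, CV, CV'.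
  assert (CF := continuous_negcube). assert (CF' := continuous_negcube').
  assert (CF'' := continuous_negcube'').
  set (dg1 := fun y => negcube'' (U y) * U1 y * U1 y + negcube' (U y) * U2 y).
  set (dg2 := fun y => negcube' (U y) * U1 y * V y + negcube (U y) * V' y).
  assert (I1 : RInt dg1 0 L = 0).
  { apply (RInt_derive_periodic L (fun y => negcube' (U y) * U1 y)).
    - intros y. unfold U1, U. rewrite (proj1 (Hu i Hi)), (C2per_periodic1 L _ (Hu i Hi)). reflexivity.
    - intros y. eapply is_derive_eq.
      + apply is_derive_Rmult; [apply is_derive_Rcomp; [apply is_derive_negcube' | auto] | auto].
      + unfold dg1. ring.
    - intros; unfold dg1; auto_cont. }
  assert (I2 : RInt dg2 0 L = 0).
  { apply (RInt_derive_periodic L (fun y => negcube (U y) * V y)).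
    - intros y. unfold U, V. rewrite (proj1 (Hu i Hi)), periodic_velocity. reflexivity.
    - intros y. eapply is_derive_eq.
      + apply is_derive_Rmult;
          [apply is_derive_Rcomp; [apply is_derive_negcube | auto] | apply is_derive_velocity].
      + unfold dg2, V'. ring.
    - intros; unfold dg2; auto_cont. }
  rewrite (RInt_ext _ (fun x => D i * dg1 x - D i * (negcube'' (U x) * U1 x ^ 2) - dg2 x
                                 - 2 * (negcube (U x) * V' x))).
  2: { intros x _. rewrite rhs_expand by auto. fold U V V' U1 U2. unfold dg1, dg2.
       pose proof (negcube'_mul (U x)). nra. }
  assert (Cdg1 : forall x, continuous dg1 x) by (intros; unfold dg1; auto_cont).
  assert (Cdg2 : forall x, continuous dg2 x) by (intros; unfold dg2; auto_cont).
  rewrite !RInt_Rminus, !RInt_Rscal, I1, I2 by (apply ex_RInt_Rcontinuous; intros; auto_cont).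
  ring.
Qed.

Lemma negcube_energy_le i C : (i < N)%nat -> 0 <= L -> 0 < D i ->
  (forall x, 0 <= x <= L -> Rabs (velocity' L N h K u s i x) <= C) ->
  RInt (fun x => negcube' (u i s x) * rhs L N D h K u i s x) 0 L
    <= 2 * C * RInt (fun x => negcube (u i s x)) 0 L.
Proof.
  intros Hi HL HD HC. rewrite negcube_energy_identity by auto.
  assert (C0 := C2per_continuous L _ (Hu i Hi)). assert (C1 := C2per_continuous1 L _ (Hu i Hi)).
  assert (CV' := continuous_velocity' i).
  assert (CF := continuous_negcube). assert (CF'' := continuous_negcube'').
  assert (J1 : 0 <= RInt (fun x => negcube'' (u i s x) * Derive (u i s) x ^ 2) 0 L).
  { apply RInt_ge_0; [auto | apply ex_RInt_Rcontinuous; intros; auto_cont |].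
    intros x _. apply Rmult_le_pos; [apply negcube''_ge0 | apply pow2_ge_0]. }
  assert (J2 : - RInt (fun x => negcube (u i s x) * velocity' L N h K u s i x) 0 L
               <= C * RInt (fun x => negcube (u i s x)) 0 L).
  { rewrite <- RInt_Ropp, <- RInt_Rscal by (apply ex_RInt_Rcontinuous; intros; auto_cont).
    apply RInt_le; [auto | apply ex_RInt_Rcontinuous; intros; auto_cont
                    | apply ex_RInt_Rcontinuous; intros; auto_cont |].
    intros x Hx. specialize (HC x ltac:(lra)). pose proof (negcube_ge0 (u i s x)).
    apply Rabs_le_between in HC. nra. }
  nra.
Qed.

End Equation.

(** * Solutions stay nonnegative and conserve mass *)

Lemma continuous_within_mono (P Q : R -> Prop) (phi : R -> R) :
  (forall s, Q s -> P s) -> continuous_within P phi -> continuous_within Q phi.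
Proof.
  intros HQ H t Qt eps He. destruct (H t (HQ t Qt) eps He) as [d [Hd Hs]].
  exists d. split; auto.
Qed.

Lemma quadratic_remainder_id : quadratic_remainder (fun v => v) (fun _ => 1) 0.
Proof. intros a b. replace (a - b - 1 * (a - b)) with 0 by ring. rewrite Rabs_R0. lra. Qed.

Lemma L1norm_pos L N (g : nat -> R -> R) : 0 < L -> (1 <= N)%nat ->
  (forall i, (i < N)%nat -> forall x, continuous (g i) x) ->
  (forall i x, (i < N)%nat -> 0 < g i x) -> 0 < L1norm L N g.
Proof.
  intros HL HN Hc Hpos. apply sumR_pos; auto. intros i Hi.
  apply RInt_gt_0; auto.
  - intros x _. apply Rabs_pos_lt. specialize (Hpos i x Hi). lra.
  - intros; auto_cont.
Qed.

Section Solution.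

Variables (L : R) (N : nat) (D : nat -> R) (h : nat -> nat -> R) (K : R -> R)
  (u0 : nat -> R -> R) (T : R) (u : nat -> R -> R -> R) (M : R).
Hypotheses (HL : 0 < L) (HT : 0 < T) (HD : forall i, (i < N)%nat -> 0 < D i)
  (HKper : periodic L K) (HK1 : forall x, ex_derive K x)
  (HK2 : forall x, ex_derive (Derive K) x) (HM : forall x, Rabs (Derive K x) <= M)
  (Hpos0 : forall i x, (i < N)%nat -> 0 < u0 i x)
  (Hsol : is_solution L N D h K u0 (Finite T) u).

Let window s := 0 <= s < T.

Lemma solution_init i x : (i < N)%nat -> u i 0 x = u0 i x.
Proof. intros Hi. apply (proj1 Hsol); auto. Qed.

Lemma solution_C2per j t : (j < N)%nat -> window t -> C2per L (u j t).
Proof.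
  intros Hj Ht. apply (proj1 (proj2 Hsol)); [auto | unfold in_time, window in *; simpl; lra].
Qed.

Lemma solution_continuous j t x : (j < N)%nat -> window t -> continuous (u j t) x.
Proof. intros; apply (C2per_continuous L), solution_C2per; auto. Qed.

Lemma solution_sup_continuous j t k : (j < N)%nat -> window t -> (k <= 2)%nat ->
  sup_continuous_at window (fun s => Derive_n (u j s) k) t.
Proof.
  intros Hj Ht Hk eps He.
  destruct (proj1 (proj2 (proj2 Hsol)) j t Hj ltac:(unfold in_time, window in *; simpl; lra) eps He)
    as [d [Hd H]].
  exists d. split; [auto |]. intros s Hs Hst x. apply H; auto.
Qed.

Lemma window_interior t : 0 < t < T -> exists d, 0 < d /\ forall s, Rabs (s - t) < d -> window s.
Proof.
  intros Ht. exists (Rmin t (T - t)). split; [apply Rmin_pos; lra |].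
  intros s Hs. pose proof (Rmin_l t (T - t)). pose proof (Rmin_r t (T - t)).
  apply Rabs_def2 in Hs. unfold window. lra.
Qed.

Section TimeIntegral.

Variables (G G' : R -> R) (c : R).
Hypotheses (Hc : 0 <= c) (HG : forall x, continuous G x) (HG' : forall x, continuous G' x)
  (Hrem : quadratic_remainder G G' c).

Lemma continuous_within_solution_integral i : (i < N)%nat ->
  continuous_within window (fun s => RInt (fun x => G (u i s x)) 0 L).
Proof.
  intros Hi. apply (continuous_within_integral L c G G'); auto; [lra | |].
  - intros s Hs x. apply solution_continuous; auto.
  - intros t Ht. apply (solution_sup_continuous i t 0); auto.
Qed.

Lemma is_derive_solution_integral i t : (i < N)%nat -> 0 < t < T ->
  is_derive (fun s => RInt (fun x => G (u i s x)) 0 L) t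
    (RInt (fun x => G' (u i t x) * rhs L N D h K u i t x) 0 L).
Proof.
  intros Hi Ht. assert (Wt : window t) by (unfold window; lra).
  apply (is_derive_integral L c G G' window); auto; [lra | | | | |].
  - intros s Hs x. apply solution_continuous; auto.
  - intros x. apply continuous_rhs; auto. intros; apply solution_C2per; auto.
  - apply window_interior; auto.
  - apply (solution_sup_continuous i t 0); auto.
  - apply (proj1 (proj2 (proj2 (proj2 Hsol)))); [auto | lra | unfold in_time; simpl; lra].
Qed.

End TimeIntegral.

Lemma velocity'_locally_bounded i t0 : window t0 -> exists C d, 0 < d /\
  forall t, window t -> Rabs (t - t0) < d ->
    forall x, 0 <= x <= L -> Rabs (velocity' L N h K u t i x) <= C.
Proof.
  intros Ht0.
  destruct (uniform_bound_lt N (fun j B => forall y, 0 <= y <= L -> Rabs (Derive (u j t0) y) <= B))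
    as [B HB].
  { intros j Hj. destruct (continuous_bounded (Derive (u j t0)) 0 L) as [B [_ HB]]; [lra | |].
    - intros; apply (C2per_continuous1 L), solution_C2per; auto.
    - exists B. auto. }
  { intros j B B' H1 H2 y Hy. eapply Rle_trans; [apply H1 |]; auto. }
  destruct (uniform_delta_lt N (fun j r => window (t0 + r) ->
      forall x, Rabs (Derive (u j (t0 + r)) x - Derive (u j t0) x) < 1)) as [d [Hd Hnear]].
  { intros j Hj. destruct (solution_sup_continuous j t0 1 Hj Ht0 ltac:(lia) 1 Rlt_0_1) as [d [Hd H]].
    exists d. split; [auto |]. intros r Hr Hw x.
    apply (H (t0 + r) Hw); replace (t0 + r - t0) with r by ring; auto. }
  exists (sumR N (fun j => Rabs (h i j) * (L * (M * (B + 1))))), d. split; [auto |].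
  intros t Ht Htt0 x Hx.
  apply velocity'_bound with (M := M) (B := fun _ => B + 1); auto; try lra.
  - intros j Hj; apply solution_C2per; auto.
  - intros j Hj y Hy. specialize (Hnear j Hj (t - t0) Htt0).
    replace (t0 + (t - t0)) with t in Hnear by ring.
    specialize (Hnear Ht y). specialize (HB j Hj y Hy).
    apply Rabs_def2 in Hnear. apply Rabs_le_between in HB. apply Rabs_le. lra.
Qed.

Lemma negcube_integral_zero_propagates i t0 : (i < N)%nat -> window t0 ->
  RInt (fun x => negcube (u i t0 x)) 0 L = 0 -> exists d, 0 < d /\
    forall s, t0 <= s < T -> s < t0 + d -> RInt (fun x => negcube (u i s x)) 0 L = 0.
Proof.
  intros Hi Ht0 Hz.
  destruct (velocity'_locally_bounded i t0 Ht0) as [C [d [Hd HC]]].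
  set (b := Rmin (t0 + d / 2) ((t0 + T) / 2)).
  assert (Hb : b <= t0 + d / 2 /\ b <= (t0 + T) / 2) by (split; [apply Rmin_l | apply Rmin_r]).
  assert (Hb0 : t0 < b) by (unfold window in Ht0; unfold b; apply Rmin_case; lra).
  exists (b - t0). split; [lra |]. intros s Hs Hsb.
  unfold window in *.
  apply (gronwall_zero (fun s => RInt (fun x => negcube (u i s x)) 0 L) t0 b (2 * C));
    auto; try lra.
  - apply (continuous_within_mono window); [unfold window; intros; lra |].
    apply (continuous_within_solution_integral negcube negcube' 3); auto using continuous_negcube,
      continuous_negcube', negcube_remainder; lra.
  - intros t Ht. eexists. split.
    + apply (is_derive_solution_integral negcube negcube' 3); auto using continuous_negcube,
        continuous_negcube', negcube_remainder; lra.
    + apply negcube_energy_le; auto; try lra.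
      * intros; apply solution_C2per; auto; unfold window; lra.
      * intros x Hx. apply (HC t); auto; [unfold window; lra | apply Rabs_def1; lra].
  - intros t Ht. apply RInt_ge_0; [lra | | intros; apply negcube_ge0].
    apply ex_RInt_Rcontinuous. intros x.
    assert (Cu := solution_continuous i t). assert (CF := continuous_negcube).
    auto_cont; apply Cu; auto; unfold window; lra.
Qed.

Lemma negcube_integral_zero i t : (i < N)%nat -> window t ->
  RInt (fun x => negcube (u i t x)) 0 L = 0.
Proof.
  intros Hi. revert t.
  apply (continuation_zero (fun s => RInt (fun x => negcube (u i s x)) 0 L) T); auto.
  - apply (continuous_within_solution_integral negcube negcube' 3); auto using continuous_negcube,
      continuous_negcube', negcube_remainder; lra.
  - rewrite (RInt_ext_0L _ (fun _ => 0)), RInt_Rconst; [ring | lra |].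
    intros y Hy. apply negcube_eq0_of_ge0. rewrite solution_init by auto. left; auto.
  - intros t0 Ht0. apply negcube_integral_zero_propagates; auto.
Qed.

Lemma solution_nonneg i t x : (i < N)%nat -> window t -> 0 <= x <= L -> 0 <= u i t x.
Proof.
  intros Hi Ht Hx. apply ge0_of_negcube_eq0.
  assert (Cu : forall x, continuous (u i t) x) by (intros; apply solution_continuous; auto).
  assert (CF := continuous_negcube).
  apply (RInt_eq0_nonneg L (fun x => negcube (u i t x))); auto;
    [intros; auto_cont | intros; apply negcube_ge0 | apply negcube_integral_zero; auto].
Qed.

Lemma solution_mass i t : (i < N)%nat -> window t ->
  RInt (fun x => u i t x) 0 L = RInt (fun x => u i 0 x) 0 L.
Proof.
  intros Hi Ht. destruct (Req_dec t 0) as [-> | Ht0]; [reflexivity |].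
  unfold window in Ht.
  apply (constant_of_derive_zero (fun s => RInt (fun x => u i s x) 0 L) 0 t); [lra | | | lra].
  - apply (continuous_within_mono window); [unfold window; intros; lra |].
    apply (continuous_within_solution_integral (fun v => v) (fun _ => 1) 0);
      auto using quadratic_remainder_id; [lra | intros; auto_cont | intros; auto_cont].
  - intros s Hs. eapply is_derive_eq.
    + apply (is_derive_solution_integral (fun v => v) (fun _ => 1) 0);
        auto using quadratic_remainder_id; [lra | intros; auto_cont | intros; auto_cont | lra].
    + rewrite (RInt_ext _ (rhs L N D h K u i s)) by (intros; apply Rmult_1_l).
      apply RInt_rhs; auto. intros; apply solution_C2per; auto; unfold window; lra.
Qed.

Lemma solution_L1norm_const t : window t -> L1norm L N (fun i => u i t) = L1norm L N u0.
Proof.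
  intros Ht. unfold L1norm. apply sumR_ext. intros i Hi.
  rewrite (RInt_ext_0L _ (fun x => u i t x)) by
    (lra || (intros; apply Rabs_pos_eq, solution_nonneg; auto)).
  rewrite solution_mass by auto.
  apply RInt_ext_0L; [lra |]. intros x Hx.
  rewrite solution_init by auto. symmetry. apply Rabs_pos_eq. left; auto.
Qed.

Lemma solution_L1norm_at_left :
  filterlim (fun t => L1norm L N (fun i => u i t)) (at_left T) (locally (L1norm L N u0)).
Proof.
  apply (filterlim_ext_loc (fun _ => L1norm L N u0)); [| apply filterlim_const].
  exists (mkposreal T HT). intros t Ht Htl. simpl in Ht.
  apply Rabs_def2 in Ht. unfold minus, plus, opp in Ht; simpl in Ht.
  symmetry. apply solution_L1norm_const. unfold window; lra.
Qed.

End Solution.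

Theorem theorem3p10 (L : R) (N : nat) (D : nat -> R) (h : nat -> nat -> R)
  (K : R -> R) (u0 : nat -> R -> R) (Tstar : Rbar) (u : nat -> R -> R -> R) :
  0 < L ->
  (1 <= N)%nat ->
  (forall i, (i < N)%nat -> 0 < D i) ->
  admissible_kernel L K ->
  (forall i, (i < N)%nat -> C2per L (u0 i)) ->
  (forall i x, (i < N)%nat -> 0 < u0 i x) ->
  Rbar_lt (Finite 0) Tstar ->
  is_solution L N D h K u0 Tstar u ->
  is_Tstar L N u0 u Tstar ->
  Tstar = p_infty.
Proof.
  intros HL HN HD HK Hu0 Hpos0 HT Hsol HTs.
  destruct HTs as [[-> _] | [T [-> [_ Hlim]]]]; [reflexivity | exfalso; simpl in HT].
  (* Only the periodicity and the regularity of [K] matter. *)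
  destruct HK as [HKper [_ [_ [_ [_ [_ [HKd [M HM]]]]]]]].
  assert (Hm : 0 < L1norm L N u0).
  { apply L1norm_pos; auto. intros; apply (C2per_continuous L), Hu0; auto. }
  assert (Hconst := solution_L1norm_at_left L N D h K u0 T u M HL HT HD HKper
                      (fun x => proj1 (HKd x)) (fun x => proj2 (HKd x)) HM Hpos0 Hsol).
  assert (2 * L1norm L N u0 = L1norm L N u0).
  { apply (@filterlim_locally_unique R R_AbsRing R_NormedModule (at_left T)
      (Proper_StrongProper _ (at_left_proper_filter T)) (fun t => L1norm L N (fun i => u i t)));
      assumption. }
  lra.
Qed.
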